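(* Let $\tau=(1,\tau)\sigma\in W$. For $x\in\mathbb Z_2$ define $\tau^x\in W$ recursively by $\tau^x=(\tau^{x/2},\tau^{x/2})$ if $x\in2\mathbb Z_2$ and $\tau^x=(\tau^{(x-1)/2},\tau^{(x+1)/2})\sigma$ if $x\in2\mathbb Z_2+1$, and let $T=\{\tau^x:x\in\mathbb Z_2\}$ (the closure of $\langle\tau\rangle$). For $x\in\mathbb Z_2^\times$ define $u_x\in W$ recursively by $u_x=(u_x,u_x\tau^{(x-1)/2})$, let $U=\{u_x:x\in\mathbb Z_2^\times\}$ and $A=TU$. Then $N_W(T)=A$ and $N_W(A)=A$.
   Context: $W$ is the isometry group of the binary rooted tree $\{0,1\}^*$. Elements are written $(g_0,g_1)\pi$, $\pi\in\mathrm{Sym}(\{0,1\})$, meaning $(xw)^{(g_0,g_1)\pi}=x^\pi w^{g_x}$; $\sigma$ is the transposition acting rigidly at the root. $\mathbb Z_2$ is the ring of $2$-adic integers and $\mathbb Z_2^\times$ its group of units. *)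

From mathcomp Require Import all_boot.
Set Implicit Arguments. Unset Strict Implicit. Unset Printing Implicit Defensive.

(* Vertices of the binary rooted tree {0,1}^* are words [seq bool]
   (false = 0, true = 1).  An element of W (isometry = automorphism of the
   rooted tree) is a bijection of words preserving length and prefixes. *)
Definition tree_map := seq bool -> seq bool.

Definition isW (f : tree_map) : Prop :=
  [/\ (forall w, size (f w) = size w),
      (forall w v, take (size w) (f (w ++ v)) = f w) & bijective f].

(* Right actions as in the paper: w^(g h) = (w^g)^h. *)
Definition mulW (g h : tree_map) : tree_map := fun w => h (g w).

(* Subsets of W are predicates, taken up to extensional equality of maps. *)
Definition tree_set := tree_map -> Prop.

(* Normalizer N_W(S) = { g in W | g^-1 S g = S }, where
   g^-1 S g = { h | exists s in S, g h = s g } (g is invertible). *)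
Definition normalizerW (S : tree_set) : tree_set := fun g =>
  isW g /\ forall h : tree_map,
    S h <-> exists s, S s /\ forall w, mulW g h w = mulW s g w.

(* x : Z2 is the 2-adic integer sum_n (x n) 2^n (binary digit stream). *)
Definition Z2 := nat -> bool.
Definition Z2_odd (x : Z2) : bool := x 0%N.
Definition Z2_half (x : Z2) : Z2 := fun n => x n.+1.
Definition Z2_succ (x : Z2) : Z2 :=
  fun n => x n (+) all x (iota 0 n).
Definition Z2_pred (x : Z2) : Z2 :=
  fun n => x n (+) all (fun k => ~~ x k) (iota 0 n).

(* tau^x = (tau^(x/2), tau^(x/2)) if x even,
   tau^x = (tau^((x-1)/2), tau^((x+1)/2)) sigma if x odd,
   with (b w)^((g0,g1) pi) = b^pi w^(g_b). *)
Fixpoint tau_act (x : Z2) (w : seq bool) : seq bool :=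
  match w with
  | [::] => [::]
  | b :: w' =>
      if ~~ Z2_odd x then b :: tau_act (Z2_half x) w'
      else (~~ b) :: tau_act (Z2_half (if b then Z2_succ x else Z2_pred x)) w'
  end.

Definition Tset : tree_set := fun t => exists x : Z2, forall w, t w = tau_act x w.

Fixpoint u_act (x : Z2) (w : seq bool) : seq bool :=
  match w with
  | [::] => [::]
  | b :: w' =>
      if b then true :: tau_act (Z2_half (Z2_pred x)) (u_act x w')
      else false :: u_act x w'
  end.

Definition Uset : tree_set :=
  fun u => exists x : Z2, Z2_odd x /\ forall w, u w = u_act x w.

Definition Aset : tree_set :=
  fun g => exists t u, Tset t /\ Uset u /\ forall w, g w = mulW t u w.

(* Read a word of length n as the residue mod 2^n whose binary expansion it is,
   least significant letter first.  Then tau^x acts on level n as k |-> k + x and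
   u_x as k |-> x k, so T consists of the prefix-preserving maps that are
   translations on every level, and A = TU of those that are affine with odd slope.
   Slopes multiply under composition, hence conjugation by an element of A keeps
   slopes and A normalizes both T and A.  Conversely, if g normalizes T then
   g tau g^-1 = tau^c for some c, i.e. g(k+1) = g(k) + c, so g is affine of slope c,
   which is odd because g is injective.  If g normalizes A, let s0 and s1 in A be
   the g-conjugates of k |-> -k and of tau; as the former inverts tau, the square
   s1^2 = g^-1 tau^2 g has slope 1 and commutes with tau.  So g tau g^-1, an element
   of A, commutes with tau^2, which forces its slope to be 1: it lies in T and we
   conclude as before. *)

From mathcomp Require Import all_boot zify cyclic.
Set Implicit Arguments. Unset Strict Implicit. Unset Printing Implicit Defensive.

Lemma eqm_add d a1 b1 a2 b2 :
  a1 = b1 %[mod d] -> a2 = b2 %[mod d] -> a1 + a2 = b1 + b2 %[mod d].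
Proof. by move=> E1 E2; rewrite -modnDm E1 E2 modnDm. Qed.

Lemma eqm_mul d a1 b1 a2 b2 :
  a1 = b1 %[mod d] -> a2 = b2 %[mod d] -> a1 * a2 = b1 * b2 %[mod d].
Proof. by move=> E1 E2; rewrite -modnMm E1 E2 modnMm. Qed.

Lemma eqm_half2 n a b : 2 * a = 2 * b %[mod 2 ^ n.+1] -> a = b %[mod 2 ^ n].
Proof.
by rewrite expnS -!muln_modr => /eqP; rewrite eqn_pmul2l // => /eqP.
Qed.

Section AffineInverse.
Variables (d a a' b : nat).
Hypotheses (a'a : a' * a = 1 %[mod d]) (b_le : b <= d).

Lemma affine_modK k : a' * ((a * k + b) %% d) + a' * (d - b) = k %[mod d].
Proof.
rewrite -modnDml modnMmr modnDml mulnDr -addnA -mulnDr subnKC // mulnA.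
by apply: etrans (eqm_add (eqm_mul a'a (erefl _)) (erefl _)) _; rewrite mul1n addnC modnMDl.
Qed.

Lemma affine_modVK k : a * (a' * k + a' * (d - b)) + b = k %[mod d].
Proof.
have aa' : a * a' = 1 %[mod d] by rewrite mulnC.
rewrite mulnDr !mulnA -addnA.
apply: etrans (eqm_add (eqm_mul aa' (erefl _)) (eqm_add (eqm_mul aa' (erefl _)) (erefl _))) _.
by rewrite !mul1n subnK // modnDr.
Qed.
End AffineInverse.

Definition modinv d a := a ^ (totient d).-1.

Lemma modinvM d a : 0 < d -> coprime a d -> modinv d a * a = 1 %[mod d].
Proof.
move=> d_gt0 co_ad; rewrite /modinv -expnSr prednK ?totient_gt0 //.
exact: Euler_exp_totient.
Qed.

(** * Words and 2-adic integers as residues *)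

Fixpoint num (w : seq bool) : nat := if w is b :: w' then b + 2 * num w' else 0.

Fixpoint word (n k : nat) : seq bool :=
  if n is n'.+1 then odd k :: word n' k./2 else [::].

Lemma size_word n k : size (word n k) = n.
Proof. by elim: n k => //= n IH k; rewrite IH. Qed.

Lemma word0 n : word n 0 = nseq n false.
Proof. by elim: n => //= n ->. Qed.

Lemma num_lt w : num w < 2 ^ size w.
Proof. by elim: w => //= b w IH; rewrite expnS; case: b => /=; lia. Qed.

Lemma word_cons n (b : bool) k : word n.+1 (b + 2 * k) = b :: word n k.
Proof.
rewrite /= oddD oddM addbF; congr (_ :: _); first by case: b.
by congr word; case: b => /=; lia.
Qed.

Lemma modn_pow2S k n : k %% 2 ^ n.+1 = odd k + 2 * (k./2 %% 2 ^ n).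
Proof.
have k_eq : k = odd k + 2 * (k./2 %% 2 ^ n) + (k./2 %/ 2 ^ n) * 2 ^ n.+1.
  by have := divn_eq k./2 (2 ^ n); have := odd_double_half k; rewrite expnS; lia.
rewrite {1}k_eq addnC modnMDl modn_small //.
by have := ltn_pmod k./2 (expn_gt0 2 n); rewrite expnS; case: (odd k) => /=; lia.
Qed.

Lemma num_word n k : num (word n k) = k %% 2 ^ n.
Proof. by elim: n k => [|n IH] k /=; rewrite ?modn1 // IH modn_pow2S. Qed.

Lemma word_num w : word (size w) (num w) = w.
Proof. by elim: w => // b w IH; rewrite -[in RHS]IH -word_cons. Qed.

Lemma word_eqP n j k : word n j = word n k <-> j = k %[mod 2 ^ n].
Proof.
split=> [E|E]; first by rewrite -!num_word E.
by rewrite -[word n j](word_num) -[word n k](word_num) !num_word !size_word E.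
Qed.

Lemma num_take m w : num (take m w) = num w %% 2 ^ m.
Proof.
elim: w m => [|b w IH] [|m] //=; rewrite ?mod0n ?modn1 // IH modn_pow2S.
by rewrite oddD oddM addbF; congr (_ + _); [case: b | congr (_ * (_ %% _)); case: b => /=; lia].
Qed.

Definition Z2_trunc n (x : Z2) : nat := num (mkseq x n).

Lemma mkseqS_half n (x : Z2) : mkseq x n.+1 = x 0 :: mkseq (Z2_half x) n.
Proof. by rewrite /mkseq /= -add1n iotaDl -map_comp. Qed.

Lemma Z2_truncS n x : Z2_trunc n.+1 x = x 0 + 2 * Z2_trunc n (Z2_half x).
Proof. by rewrite /Z2_trunc mkseqS_half. Qed.

Lemma eq_Z2_trunc n x y : x =1 y -> Z2_trunc n x = Z2_trunc n y.
Proof. by move=> E; rewrite /Z2_trunc (eq_mkseq E). Qed.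

Lemma Z2_trunc_lt n x : Z2_trunc n x < 2 ^ n.
Proof. by rewrite -[in X in _ < 2 ^ X](size_mkseq x n) num_lt. Qed.

Lemma Z2_trunc_mod m n x : n <= m -> Z2_trunc m x = Z2_trunc n x %[mod 2 ^ n].
Proof.
move=> /subnKC <-; rewrite [RHS]modn_small ?Z2_trunc_lt // /Z2_trunc -num_take.
by rewrite /mkseq iotaD map_cat take_size_cat // size_map size_iota.
Qed.

Lemma Z2_half_succ_odd x : Z2_odd x -> Z2_half (Z2_succ x) =1 Z2_succ (Z2_half x).
Proof. by move=> x0 i; rewrite /Z2_half /Z2_succ /= (iotaDl 1 0) all_map [x 0]x0. Qed.

Lemma Z2_half_succ_even x : ~~ Z2_odd x -> Z2_half (Z2_succ x) =1 Z2_half x.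
Proof. by move=> /negbTE x0 i; rewrite /Z2_half /Z2_succ /= [x 0]x0 addbF. Qed.

Lemma Z2_half_pred_odd x : Z2_odd x -> Z2_half (Z2_pred x) =1 Z2_half x.
Proof. by move=> x0 i; rewrite /Z2_half /Z2_pred /= [x 0]x0 addbF. Qed.

Lemma Z2_trunc_succ n x : Z2_trunc n (Z2_succ x) = (Z2_trunc n x).+1 %[mod 2 ^ n].
Proof.
elim: n x => [|n IH] x; first by rewrite !modn1.
rewrite !Z2_truncS [Z2_succ x 0]addbT; case x0 : (x 0) => /=.
- rewrite (eq_Z2_trunc _ (Z2_half_succ_odd x0)) expnS.
  have -> : (1 + 2 * Z2_trunc n (Z2_half x)).+1 = 2 * (Z2_trunc n (Z2_half x)).+1.
    by lia.
  by rewrite -!muln_modr IH.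
- by rewrite (eq_Z2_trunc _ (Z2_half_succ_even (negbT x0))).
Qed.

Lemma mkseq_const n (b : bool) : mkseq (fun=> b) n = nseq n b.
Proof. by elim: n => // n IH; rewrite mkseqS_half IH. Qed.

Lemma Z2_trunc_const n (b : bool) : Z2_trunc n (fun=> b) = b * (2 ^ n - 1).
Proof.
rewrite /Z2_trunc mkseq_const; elim: n => [|n /= ->]; first by rewrite muln0.
by have := expn_gt0 2 n; rewrite expnS; case: b => /=; lia.
Qed.

Definition Z2_one : Z2 := fun i => i == 0.
Definition Z2_neg1 : Z2 := fun=> true.

Lemma Z2_trunc_one n : Z2_trunc n Z2_one = 1 %[mod 2 ^ n].
Proof.
case: n => [|n]; first by rewrite !modn1.
by rewrite Z2_truncS (eq_Z2_trunc n (_ : Z2_half Z2_one =1 fun=> false)) // Z2_trunc_const.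
Qed.

Lemma Z2_unit_modinv x : Z2_odd x ->
  forall n, modinv (2 ^ n) (Z2_trunc n x) * Z2_trunc n x = 1 %[mod 2 ^ n].
Proof.
move=> x_odd [|n]; first by rewrite !modn1.
apply: modinvM; first by rewrite expn_gt0.
by rewrite coprimeXr // coprimen2 Z2_truncS [x 0]x_odd oddD oddM.
Qed.

Lemma tau_actE x w : tau_act x w = word (size w) (num w + Z2_trunc (size w) x).
Proof.
elim: w x => [|b w IH] x //; rewrite [size _]/= [num _]/= Z2_truncS.
set t := Z2_trunc (size w) (Z2_half x).
rewrite -[x 0]/(Z2_odd x); case x0 : (Z2_odd x); rewrite [LHS]/= x0 [LHS]/=; last first.
  by rewrite IH -/t -word_cons; f_equal; lia.
case: b; rewrite [LHS]/= IH.
- rewrite (eq_Z2_trunc _ (Z2_half_succ_odd x0)) -/t.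
  have -> : true + 2 * num w + (true + 2 * t) = false + 2 * (num w + t.+1) by lia.
  rewrite word_cons; congr (_ :: _); apply/word_eqP.
  exact/eqm_add/Z2_trunc_succ.
- rewrite (eq_Z2_trunc _ (Z2_half_pred_odd x0)) -/t -word_cons.
  by f_equal; lia.
Qed.

Lemma u_actE x w : Z2_odd x -> u_act x w = word (size w) (num w * Z2_trunc (size w) x).
Proof.
move=> x0; elim: w => [|b w IH] //; rewrite [size _]/= [num _]/=.
have truncS := Z2_truncS (size w) x; rewrite [x 0]x0 in truncS.
have truncE : Z2_trunc (size w).+1 x = Z2_trunc (size w) x %[mod 2 ^ size w].
  exact: Z2_trunc_mod.
rewrite /u_act -/u_act; case: b.
- rewrite tau_actE IH size_word num_word (eq_Z2_trunc _ (Z2_half_pred_odd x0)).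
  set h := Z2_trunc (size w) (Z2_half x).
  have -> : (true + 2 * num w) * Z2_trunc (size w).+1 x
          = true + 2 * (num w * Z2_trunc (size w).+1 x + h) by rewrite truncS; lia.
  rewrite word_cons; congr (_ :: _); apply/word_eqP.
  by apply: eqm_add => //; rewrite modn_mod; apply: eqm_mul.
- have -> : (false + 2 * num w) * Z2_trunc (size w).+1 x
          = false + 2 * (num w * Z2_trunc (size w).+1 x) by lia.
  rewrite word_cons IH; congr (_ :: _); apply/word_eqP.
  exact: eqm_mul.
Qed.

Lemma take_tau_act x m w : take m (tau_act x w) = tau_act x (take m w).
Proof. by elim: w m x => [|b w IH] [|m] x //=; rewrite ?take0 //; case: ifP; rewrite /= IH. Qed.

Lemma take_u_act x m w : take m (u_act x w) = u_act x (take m w).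
Proof.
by elim: w m => [|b w IH] [|m] //=; rewrite ?take0 //; case: b; rewrite /= ?take_tau_act IH.
Qed.

Lemma tau_one_word n k : tau_act Z2_one (word n k) = word n k.+1.
Proof.
rewrite tau_actE size_word num_word; apply/word_eqP.
by rewrite modnDml -modnDmr Z2_trunc_one modnDmr addn1.
Qed.

Lemma neg1_word n k : u_act Z2_neg1 (word n k) = word n (k * (2 ^ n - 1)).
Proof.
by rewrite u_actE // size_word num_word Z2_trunc_const mul1n; apply/word_eqP; rewrite modnMml.
Qed.

Lemma sqr_pow2_pred n : (2 ^ n - 1) * (2 ^ n - 1) = 1 %[mod 2 ^ n].
Proof.
case: n => [|n]; first by rewrite !modn1.
have : 2 <= 2 ^ n.+1 by rewrite expnS; have := expn_gt0 2 n; lia.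
move: (2 ^ n.+1) => d d_ge2.
have -> : (d - 1) * (d - 1) = (d - 2) * d + 1 by nia.
by rewrite modnMDl.
Qed.

Lemma neg1_involutive : involutive (u_act Z2_neg1).
Proof.
move=> w; rewrite -(word_num w) !neg1_word; apply/word_eqP.
by rewrite -mulnA -[X in _ = X %[mod _]]muln1; apply: eqm_mul => //; apply: sqr_pow2_pred.
Qed.

Lemma neg1_inverts_tau w :
  u_act Z2_neg1 (tau_act Z2_one (u_act Z2_neg1 (tau_act Z2_one w))) = w.
Proof.
rewrite -(word_num w) tau_one_word neg1_word tau_one_word neg1_word; apply/word_eqP.
set d := 2 ^ size w; have d_gt0 : 0 < d by rewrite expn_gt0.
have -> : ((num w).+1 * (d - 1)).+1 * (d - 1) = (num w).+1 * ((d - 1) * (d - 1)) + (d - 1).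
  by nia.
apply: etrans (eqm_add (eqm_mul (erefl _) (sqr_pow2_pred _)) (erefl _)) _.
by rewrite muln1 addSnnS subn1 prednK // modnDr.
Qed.

(** * Level-affine and prefix-preserving maps *)

Definition level_affine (f : tree_map) (a : nat -> nat) :=
  forall n, exists b, forall k, f (word n k) = word n (a n * k + b).

Section LevelAffine.
Variables (f : tree_map) (a : nat -> nat).
Hypothesis f_aff : level_affine f a.

Lemma level_affineE n k : f (word n k) = word n (a n * k + num (f (word n 0))).
Proof.
have [b fb] := f_aff n.
by rewrite !fb muln0 add0n num_word; apply/word_eqP; rewrite modnDmr.
Qed.

Lemma level_affine_size w : size (f w) = size w.
Proof. by rewrite -(word_num w) level_affineE !size_word. Qed.

Lemma level_affine_ext f' : f =1 f' -> level_affine f' a.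
Proof. by move=> E n; have [b fb] := f_aff n; exists b => k; rewrite -E. Qed.

Lemma level_affine_eqm a' :
  (forall n, a n = a' n %[mod 2 ^ n]) -> level_affine f a'.
Proof.
move=> E n; exists (num (f (word n 0))) => k; rewrite level_affineE.
by apply/word_eqP; apply: eqm_add => //; apply: eqm_mul.
Qed.

Lemma level_affine_comp g b : level_affine g b -> level_affine (f \o g) (fun n => a n * b n).
Proof.
move=> g_aff n; have [c fc] := f_aff n; have [d gd] := g_aff n.
by exists (a n * d + c) => k /=; rewrite gd fc mulnDr mulnA addnA.
Qed.

Lemma level_affine_id_slope : f =1 id -> forall n, a n = 1 %[mod 2 ^ n].
Proof.
move=> f_id n; have [b fb] := f_aff n.
move: (fb 0) (fb 1); rewrite !f_id => /word_eqP E0 /word_eqP E1.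
by rewrite muln0 add0n in E0; rewrite E1 -modnDmr -E0 modnDmr muln1 addn0.
Qed.

Lemma level_affine_inverse a' : (forall n, a' n * a n = 1 %[mod 2 ^ n]) ->
  exists fi, [/\ cancel f fi, cancel fi f & level_affine fi a'].
Proof.
move=> a'a; have D_le n : num (f (word n 0)) <= 2 ^ n.
  by apply: ltnW; rewrite -[X in _ < 2 ^ X](size_word n 0) -level_affine_size num_lt.
pose fi w := let n := size w in
  word n (a' n * num w + a' n * (2 ^ n - num (f (word n 0)))).
exists fi; split.
- move=> w; rewrite /fi level_affine_size -[in f w](word_num w) level_affineE.
  rewrite num_word -[RHS]word_num; apply/word_eqP.
  exact: affine_modK (a'a (size w)) (D_le (size w)) (num w).
- move=> w; rewrite /fi level_affineE -[RHS]word_num; apply/word_eqP.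
  exact: affine_modVK (a'a (size w)) (D_le (size w)) (num w).
- move=> n; exists (a' n * (2 ^ n - num (f (word n 0)))) => k.
  by rewrite /fi size_word num_word; apply/word_eqP; rewrite -modnDml modnMmr modnDml.
Qed.

End LevelAffine.

Lemma translations_commute f f' : level_affine f (fun=> 1) -> level_affine f' (fun=> 1) ->
  f \o f' =1 f' \o f.
Proof.
move=> f_aff f'_aff w; rewrite -(word_num w) /=.
have [b fb] := f_aff (size w); have [b' f'b'] := f'_aff (size w).
by rewrite fb f'b' fb f'b' !mul1n addnAC.
Qed.

Lemma level_affine_inverted_sq p q a b : level_affine p a -> level_affine q b ->
  involutive q -> (forall w, q (p (q (p w))) = w) -> level_affine (p \o p) (fun=> 1).
Proof.
move=> p_aff q_aff qK qpqp.
have bb := level_affine_id_slope (level_affine_comp q_aff q_aff) qK.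
have baba := level_affine_id_slope
  (level_affine_comp q_aff (level_affine_comp p_aff (level_affine_comp q_aff p_aff))) qpqp.
apply: (level_affine_eqm (level_affine_comp p_aff p_aff)) => n.
rewrite -[a n * a n]muln1; apply: etrans (eqm_mul (erefl _) (esym (bb n))) _.
by rewrite -(baba n); congr (_ %% _); nia.
Qed.

Definition prefix_preserving (f : tree_map) :=
  forall w v, take (size w) (f (w ++ v)) = f w.

Lemma prefix_preserving_take f :
  (forall m w, take m (f w) = f (take m w)) -> prefix_preserving f.
Proof. by move=> fT w v; rewrite fT take_size_cat. Qed.

Lemma prefix_preserving_ext f f' : f =1 f' -> prefix_preserving f -> prefix_preserving f'.
Proof. by move=> E fp w v; rewrite -!E. Qed.

Lemma prefix_preserving_comp f g : prefix_preserving f -> prefix_preserving g ->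
  (forall w, size (g w) = size w) -> prefix_preserving (f \o g).
Proof.
move=> fp gp gs w v /=.
by rewrite -(cat_take_drop (size w) (g (w ++ v))) gp -{1}(gs w) fp.
Qed.

Lemma prefix_preserving_inv f fi : prefix_preserving f ->
  (forall w, size (f w) = size w) -> cancel f fi -> cancel fi f -> prefix_preserving fi.
Proof.
move=> fp fs fK fiK w v; set u := fi (w ++ v).
have size_u : size u = size w + size v by rewrite -fs /u fiK size_cat.
have size_take_u : size (take (size w) u) = size w by rewrite size_takel // size_u leq_addr.
have fu : f (take (size w) u) = w.
  by rewrite -(fp _ (drop (size w) u)) cat_take_drop size_take_u fiK take_size_cat.
by rewrite -[in RHS]fu fK.
Qed.

Definition zero_path (f : tree_map) : Z2 := fun i => nth false (f (nseq i.+1 false)) i.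

Lemma mkseq_zero_path f n : prefix_preserving f -> (forall w, size (f w) = size w) ->
  mkseq (zero_path f) n = f (nseq n false).
Proof.
move=> fp fs; apply: (@eq_from_nth _ false); first by rewrite size_mkseq fs size_nseq.
rewrite size_mkseq => i lt_in; rewrite nth_mkseq // /zero_path.
rewrite -(subnKC lt_in) nseqD -(fp (nseq i.+1 false) (nseq (n - i.+1) false)).
by rewrite size_nseq nth_take.
Qed.

Lemma prefix_translation f : prefix_preserving f -> level_affine f (fun=> 1) ->
  f =1 tau_act (zero_path f).
Proof.
move=> fp f_aff w; have fs := level_affine_size f_aff.
rewrite tau_actE -[in f w](word_num w) (level_affineE f_aff) mul1n.
by rewrite /Z2_trunc mkseq_zero_path // word0.
Qed.

Lemma tau_act_prefix x : prefix_preserving (tau_act x).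
Proof. exact/prefix_preserving_take/take_tau_act. Qed.

Lemma u_act_prefix x : prefix_preserving (u_act x).
Proof. exact/prefix_preserving_take/take_u_act. Qed.

Lemma tau_act_level_affine x : level_affine (tau_act x) (fun=> 1).
Proof.
move=> n; exists (Z2_trunc n x) => k.
by rewrite tau_actE size_word num_word mul1n; apply/word_eqP; rewrite modnDml.
Qed.

Lemma u_act_level_affine x : Z2_odd x -> level_affine (u_act x) (Z2_trunc^~ x).
Proof.
move=> x_odd n; exists 0 => k.
by rewrite u_actE // size_word num_word addn0 mulnC; apply/word_eqP; rewrite modnMmr.
Qed.

Lemma Tset_iff f : Tset f <-> prefix_preserving f /\ level_affine f (fun=> 1).
Proof.
split=> [[x fx] | [fp f_aff]]; last by exists (zero_path f); apply: prefix_translation.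
have taufE : tau_act x =1 f by move=> w; rewrite fx.
split; first exact: prefix_preserving_ext taufE (tau_act_prefix x).
exact: (level_affine_ext (tau_act_level_affine x) taufE).
Qed.

Lemma Aset_iff f : Aset f <->
  prefix_preserving f /\ exists2 x, Z2_odd x & level_affine f (Z2_trunc^~ x).
Proof.
split=> [[t [u [[y ty] [[x [x_odd ux]] fE]]]] | [fp [x x_odd f_aff]]].
  have utfE : u_act x \o tau_act y =1 f by move=> w; rewrite fE /mulW ty ux.
  split.
    apply: prefix_preserving_ext utfE _.
    exact: prefix_preserving_comp (u_act_prefix x) (tau_act_prefix y)
      (level_affine_size (tau_act_level_affine y)).
  exists x => //; apply: (level_affine_ext _ utfE).
  apply: (level_affine_eqm
    (level_affine_comp (u_act_level_affine x_odd) (tau_act_level_affine y))).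
  by move=> n; rewrite muln1.
have u_aff := u_act_level_affine x_odd.
have [ui [uK uiK ui_aff]] := level_affine_inverse u_aff (Z2_unit_modinv x_odd).
have ui_pref := prefix_preserving_inv (u_act_prefix x) (level_affine_size u_aff) uK uiK.
exists (ui \o f), (u_act x); split; [apply/Tset_iff; split | split].
- exact: prefix_preserving_comp ui_pref fp (level_affine_size f_aff).
- apply: (level_affine_eqm (level_affine_comp ui_aff f_aff)).
  exact: Z2_unit_modinv.
- by exists x.
- by move=> w; rewrite /mulW /= uiK.
Qed.

Lemma Tset_tau_one : Tset (tau_act Z2_one).
Proof. by exists Z2_one. Qed.

Lemma Tset_sub_Aset f : Tset f -> Aset f.
Proof.
move=> /Tset_iff [f_pref f_aff]; apply/Aset_iff; split=> //; exists Z2_one => //.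
by apply: (level_affine_eqm f_aff) => n; rewrite Z2_trunc_one.
Qed.

Lemma Aset_u_act x : Z2_odd x -> Aset (u_act x).
Proof.
move=> x_odd; apply/Aset_iff; split; first exact: u_act_prefix.
by exists x; last exact: u_act_level_affine.
Qed.

(** * Normalizers *)

Lemma normalizerW_conj (S : tree_set) g gi : isW g -> cancel g gi -> cancel gi g ->
  (forall f f', f =1 f' -> S f -> S f') ->
  (forall h, S h -> S (gi \o h \o g) /\ S (g \o h \o gi)) -> normalizerW S g.
Proof.
move=> gW gK giK S_ext S_conj; split=> // h; split=> [Sh | [s [Ss hgE]]].
  exists (gi \o h \o g); split; first by case: (S_conj h Sh).
  by move=> w; rewrite /mulW /= giK.
apply: S_ext (proj2 (S_conj s Ss)) => w /=.
by have := hgE (gi w); rewrite /mulW giK.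
Qed.

Section ConjugationByAffine.
Variables (g gi : tree_map) (a a' : nat -> nat).
Hypotheses (g_pref : prefix_preserving g) (g_aff : level_affine g a).
Hypotheses (gi_aff : level_affine gi a') (a'a : forall n, a' n * a n = 1 %[mod 2 ^ n]).
Hypotheses (gK : cancel g gi) (giK : cancel gi g).

Lemma affine_isW : isW g.
Proof. by split; [exact: level_affine_size g_aff | | exists gi]. Qed.

Lemma conj_level_affine h s : level_affine h s ->
  level_affine (gi \o h \o g) s /\ level_affine (g \o h \o gi) s.
Proof.
move=> h_aff; split.
- apply: (level_affine_eqm (level_affine_comp gi_aff (level_affine_comp h_aff g_aff))).
  by move=> n; rewrite mulnCA -[in RHS](muln1 (s n)); apply: eqm_mul.
- apply: (level_affine_eqm (level_affine_comp g_aff (level_affine_comp h_aff gi_aff))).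
  by move=> n; rewrite mulnCA -[in RHS](muln1 (s n)); apply: eqm_mul; rewrite // mulnC.
Qed.

Lemma conj_prefix_preserving h : prefix_preserving h -> (forall w, size (h w) = size w) ->
  prefix_preserving (gi \o h \o g) /\ prefix_preserving (g \o h \o gi).
Proof.
move=> h_pref h_size; have g_size := level_affine_size g_aff.
have gi_size := level_affine_size gi_aff.
have gi_pref := prefix_preserving_inv g_pref g_size gK giK.
split.
- exact: (prefix_preserving_comp (prefix_preserving_comp gi_pref h_pref h_size) g_pref g_size).
- exact: (prefix_preserving_comp (prefix_preserving_comp g_pref h_pref h_size) gi_pref gi_size).
Qed.

Lemma affine_normalizes_Tset : normalizerW Tset g.
Proof.
apply: normalizerW_conj affine_isW gK giK _ _.
  by move=> f f' E [x fx]; exists x => w; rewrite -E.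
move=> h /Tset_iff [h_pref h_aff].
have [hp1 hp2] := conj_prefix_preserving h_pref (level_affine_size h_aff).
have [ha1 ha2] := conj_level_affine h_aff.
by split; apply/Tset_iff.
Qed.

Lemma affine_normalizes_Aset : normalizerW Aset g.
Proof.
apply: normalizerW_conj affine_isW gK giK _ _.
  by move=> f f' E [t [u [Tt [Uu fE]]]]; exists t, u; do 2 split=> //; move=> w; rewrite -E.
move=> h /Aset_iff [h_pref [y y_odd h_aff]].
have [hp1 hp2] := conj_prefix_preserving h_pref (level_affine_size h_aff).
have [ha1 ha2] := conj_level_affine h_aff.
by split; apply/Aset_iff; split=> //; exists y.
Qed.

End ConjugationByAffine.

Lemma Aset_normalizes g : Aset g -> normalizerW Tset g /\ normalizerW Aset g.
Proof.
move=> /Aset_iff [g_pref [x x_odd g_aff]].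
have a'a := Z2_unit_modinv x_odd.
have [gi [gK giK gi_aff]] := level_affine_inverse g_aff a'a.
split; [exact: (affine_normalizes_Tset g_pref g_aff gi_aff a'a gK giK)
       | exact: (affine_normalizes_Aset g_pref g_aff gi_aff a'a gK giK)].
Qed.

Lemma commute_tau2_slope1 h y : level_affine h (Z2_trunc^~ y) ->
  (forall w, h (tau_act Z2_one (tau_act Z2_one w)) = tau_act Z2_one (tau_act Z2_one (h w))) ->
  forall n, Z2_trunc n y = 1 %[mod 2 ^ n].
Proof.
move=> h_aff hE n; rewrite -(Z2_trunc_mod y (leqnSn n)); apply: eqm_half2.
have [b hb] := h_aff n.+1.
move: (hE (word n.+1 0)); rewrite !tau_one_word !hb !tau_one_word => /word_eqP.
rewrite muln0 add0n -[b.+2]addn2 addnC => /eqP.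
by rewrite eqn_modDl muln1 mulnC => /eqP.
Qed.

Lemma Aset_of_Tset_conj g gi : isW g -> cancel g gi ->
  Tset (g \o tau_act Z2_one \o gi) -> Aset g.
Proof.
move=> [g_size g_pref _] gK [c hc].
have gE w : g (tau_act Z2_one w) = tau_act c (g w) by rewrite -hc /= gK.
have g_aff n k : g (word n k) = word n (Z2_trunc n c * k + num (g (word n 0))).
  elim: k => [|k IH]; first by rewrite muln0 add0n -{1}[g (word n 0)]word_num g_size size_word.
  rewrite -tau_one_word gE IH tau_actE size_word num_word; apply/word_eqP.
  by rewrite modnDml mulnSr addnAC.
have c_odd : Z2_odd c.
  rewrite /Z2_odd; case c0 : (c 0) => //.
  have t0 : Z2_trunc 1 c = 0 by rewrite Z2_truncS c0.
  have : g (word 1 1) = g (word 1 0) by rewrite g_aff [RHS]g_aff t0.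
  by move/(can_inj gK).
apply/Aset_iff; split=> //; exists c => // n.
by exists (num (g (word n 0))); apply: g_aff.
Qed.

Lemma normalizerW_Tset_sub g : normalizerW Tset g -> Aset g.
Proof.
move=> [gW gN]; have [_ _ [gi gK _]] := gW; apply: (Aset_of_Tset_conj gW gK).
by apply/gN; exists (tau_act Z2_one); split=> [|w]; [exact: Tset_tau_one | rewrite /mulW /= gK].
Qed.

Lemma normalizerW_Aset_sub g : normalizerW Aset g -> Aset g.
Proof.
move=> [gW gN]; have [_ _ [gi gK giK]] := gW; have g_inj := can_inj gK.
have [s0 [/Aset_iff [_ [b _ s0_aff]] s0E]] := proj1 (gN _) (Aset_u_act (isT : Z2_odd Z2_neg1)).
have [s1 [/Aset_iff [_ [a _ s1_aff]] s1E]] := proj1 (gN _) (Tset_sub_Aset Tset_tau_one).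
rewrite /mulW in s0E s1E.
have s0K : involutive s0 by move=> w; apply: g_inj; rewrite -!s0E neg1_involutive.
have s0_inv_s1 w : s0 (s1 (s0 (s1 w))) = w.
  by apply: g_inj; rewrite -s0E -s1E -s0E -s1E neg1_inverts_tau.
(* [s1 \o s1] is the g-conjugate of tau^2 and a translation, since [s0] inverts [s1]. *)
have pi_aff := level_affine_inverted_sq s1_aff s0_aff s0K s0_inv_s1.
have /Aset_iff [h_pref [y _ h_aff]] : Aset (g \o tau_act Z2_one \o gi).
  apply/gN; exists (tau_act Z2_one); split=> [|w]; last by rewrite /mulW /= gK.
  exact: Tset_sub_Aset Tset_tau_one.
have tau2E w : tau_act Z2_one (tau_act Z2_one w) = g ((s1 \o s1) (gi w)).
  by rewrite /= -!s1E giK.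
have h_comm w : (g \o tau_act Z2_one \o gi) (tau_act Z2_one (tau_act Z2_one w))
              = tau_act Z2_one (tau_act Z2_one ((g \o tau_act Z2_one \o gi) w)).
  rewrite !tau2E /= !gK; congr g.
  exact: (translations_commute (tau_act_level_affine _) pi_aff).
apply: (Aset_of_Tset_conj gW gK); apply/Tset_iff; split=> //.
exact: (level_affine_eqm h_aff (commute_tau2_slope1 h_aff h_comm)).
Qed.

Theorem theorem4p13 :
  (forall g : tree_map, normalizerW Tset g <-> Aset g) /\
  (forall g : tree_map, normalizerW Aset g <-> Aset g).
Proof.
split=> g; split.
- exact: normalizerW_Tset_sub.
- by case/Aset_normalizes.
- exact: normalizerW_Aset_sub.
- by case/Aset_normalizes.
Qed.
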